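(* Fix $k\ge0$. Let $\mathcal G$ be a discrete groupoid acting self-similarly on a finitely aligned $(k+1)$-graph $\Lambda$, and let $\Gamma=d^{-1}(\mathbb N^k\times\{0\})$. Then $\Gamma\bowtie\mathcal G$ is a concordant subcategory of $\Lambda\bowtie\mathcal G$.
   Context: A $(k+1)$-graph is a countable small category $\Lambda$ with a functor $d:\Lambda\to\mathbb N^{k+1}$ such that whenever $d(\lambda)=m+n$ there are unique $\mu,\nu$ with $\lambda=\mu\nu$, $d(\mu)=m$, $d(\nu)=n$; it is finitely aligned if for all $\mu,\nu$ there is finite $F$ with $\mu\Lambda\cap\nu\Lambda=\bigcup_{c\in F}c\Lambda$. A self-similar action of a discrete groupoid $\mathcal G$ ($\mathcal G^0=\Lambda^0$) on $\Lambda$ consists of a left action $g\triangleright\lambda\in\Lambda$ and right action $g\triangleleft\lambda\in\mathcal G$ (for $s(g)=r(\lambda)$) with $s(g\triangleright\lambda)=r(g\triangleleft\lambda)$, $g\triangleright(\lambda\mu)=(g\triangleright\lambda)((g\triangleleft\lambda)\triangleright\mu)$, $(gh)\triangleleft\lambda=(g\triangleleft(h\triangleright\lambda))(h\triangleleft\lambda)$, and $d(g\triangleright\lambda)=d(\lambda)$. $\Lambda\bowtie\mathcal G$ is the Zappa–Szép product: morphisms $\lambda g$ ($s(\lambda)=r(g)$) with product $\lambda g\mu h=\lambda(g\triangleright\mu)(g\triangleleft\mu)h$; $\Gamma\bowtie\mathcal G$ is a subcategory. For a finitely aligned left-cancellative category $\mathcal X$ ($x\mathcal X=\{xx'\}$,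 $F\mathcal X=\bigcup_{c\in F}c\mathcal X$, $F$ independent if $a\notin a'\mathcal X$ for distinct $a,a'\in F$), a subcategory $\mathcal C$ is concordant if for all $c_1,c_2\in\mathcal C$ with $c_1\mathcal X\cap c_2\mathcal X\ne\emptyset$ there is a finite independent $F\subseteq\mathcal C$ with $c_1\mathcal C\cap c_2\mathcal C=F\mathcal C$ such that whenever $x_1,x_2\in\mathcal X$ satisfy $c_1x_1=c_2x_2$, there exist $a_1,a_2$ with $c_1a_1=c_2a_2\in F$ and $y\in\mathcal X$ with $x_1=a_1y$, $x_2=a_2y$. *)

From mathcomp Require Import all_boot.
From Stdlib Require Import List.

Set Implicit Arguments.
Unset Strict Implicit.
Unset Printing Implicit Defensive.

Definition degadd (n : nat) (a b : {ffun 'I_n -> nat}) : {ffun 'I_n -> nat} :=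
  [ffun i => a i + b i].

(* Generic partial-composition category data: a type X of morphisms, a
   predicate [valid] carving out the actual morphisms, source/range maps and a
   (total, meaningful only on composable pairs) composition.                 *)

Definition right_mult (X O : Type) (D : X -> Prop) (src rng : X -> O)
  (comp : X -> X -> X) (c y : X) : Prop :=
  exists x, D x /\ src c = rng x /\ y = comp c x.

Definition concordant (X O : Type) (valid : X -> Prop) (src rng : X -> O)
  (comp : X -> X -> X) (C : X -> Prop) : Prop :=
  forall c1 c2 : X, C c1 -> C c2 ->
  (exists y, right_mult valid src rng comp c1 y /\
             right_mult valid src rng comp c2 y) ->
  exists F : list X,
    (forall a, In a F -> C a) /\
    (forall a a', In a F -> In a' F -> a <> a' ->
        ~ right_mult valid src rng comp a' a) /\
    (forall y, (right_mult C src rng comp c1 y /\ right_mult C src rng comp c2 y)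
               <-> exists a, In a F /\ right_mult C src rng comp a y) /\
    (forall x1 x2, valid x1 -> valid x2 -> src c1 = rng x1 -> src c2 = rng x2 ->
       comp c1 x1 = comp c2 x2 ->
       exists a1 a2 y, valid a1 /\ valid a2 /\ valid y /\
         src c1 = rng a1 /\ src c2 = rng a2 /\
         comp c1 a1 = comp c2 a2 /\ In (comp c1 a1) F /\
         src a1 = rng y /\ src a2 = rng y /\
         x1 = comp a1 y /\ x2 = comp a2 y).

Record ngraph (n : nat) := NGraph {
  vert : Type;
  mor : Type;
  src : mor -> vert;
  rng : mor -> vert;
  idm : vert -> mor;
  cmp : mor -> mor -> mor;
  deg : mor -> {ffun 'I_n -> nat};
  src_idm : forall v, src (idm v) = v;
  rng_idm : forall v, rng (idm v) = v;
  src_cmp : forall a b, src a = rng b -> src (cmp a b) = src b;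
  rng_cmp : forall a b, src a = rng b -> rng (cmp a b) = rng a;
  idm_cmpl : forall a, cmp (idm (rng a)) a = a;
  idm_cmpr : forall a, cmp a (idm (src a)) = a;
  cmpA : forall a b c, src a = rng b -> src b = rng c ->
           cmp a (cmp b c) = cmp (cmp a b) c;
  (* countability (of the morphisms, hence of the objects via idm) *)
  mor_countable : exists f : mor -> nat, injective f;
  deg_cmp : forall a b, src a = rng b -> deg (cmp a b) = degadd (deg a) (deg b);
  factorisation : forall l m p, deg l = degadd m p ->
    exists mu nu, src mu = rng nu /\ l = cmp mu nu /\ deg mu = m /\ deg nu = p /\
      forall mu' nu', src mu' = rng nu' -> l = cmp mu' nu' -> deg mu' = m ->
        deg nu' = p -> mu' = mu /\ nu' = nu
}.

Definition finitely_aligned (n : nat) (L : ngraph n) : Prop :=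
  forall mu nu : mor L, exists F : list (mor L),
    forall l, (right_mult (fun _ => True) (@src n L) (@rng n L) (@cmp n L) mu l /\
               right_mult (fun _ => True) (@src n L) (@rng n L) (@cmp n L) nu l)
      <-> exists c, In c F /\
           right_mult (fun _ => True) (@src n L) (@rng n L) (@cmp n L) c l.

Record groupoid (V : Type) := Groupoid {
  gel : Type;
  gs : gel -> V;
  gr : gel -> V;
  gid : V -> gel;
  gmul : gel -> gel -> gel;
  ginv : gel -> gel;
  gs_gid : forall v, gs (gid v) = v;
  gr_gid : forall v, gr (gid v) = v;
  gs_gmul : forall g h, gs g = gr h -> gs (gmul g h) = gs h;
  gr_gmul : forall g h, gs g = gr h -> gr (gmul g h) = gr g;
  gid_mull : forall g, gmul (gid (gr g)) g = g;
  gid_mulr : forall g, gmul g (gid (gs g)) = g;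
  gmulA : forall g h l, gs g = gr h -> gs h = gr l ->
            gmul g (gmul h l) = gmul (gmul g h) l;
  gs_ginv : forall g, gs (ginv g) = gr g;
  gr_ginv : forall g, gr (ginv g) = gs g;
  ginv_mulr : forall g, gmul g (ginv g) = gid (gr g);
  ginv_mull : forall g, gmul (ginv g) g = gid (gs g)
}.

Record self_similar (n : nat) (L : ngraph n) (G : groupoid (vert L)) := SelfSim {
  act : gel G -> mor L -> mor L;
  res : gel G -> mor L -> gel G;
  rng_act : forall g l, gs g = rng l -> rng (act g l) = gr g;
  act_gid : forall l, act (gid G (rng l)) l = l;
  act_gmul : forall g h l, gs g = gr h -> gs h = rng l ->
    act (gmul g h) l = act g (act h l);
  gs_res : forall g l, gs g = rng l -> gs (res g l) = src l;
  src_act : forall g l, gs g = rng l -> src (act g l) = gr (res g l);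
  res_gid : forall l, res (gid G (rng l)) l = gid G (src l);
  res_vert : forall g, res g (idm (gs g)) = g;
  res_cmp : forall g l m, gs g = rng l -> src l = rng m ->
    res g (cmp l m) = res (res g l) m;
  res_gmul : forall g h l, gs g = gr h -> gs h = rng l ->
    res (gmul g h) l = gmul (res g (act h l)) (res h l);
  act_cmp : forall g l m, gs g = rng l -> src l = rng m ->
    act g (cmp l m) = cmp (act g l) (act (res g l) m);
  deg_act : forall g l, gs g = rng l -> deg (act g l) = deg l
}.

Section ZS.
Variables (n : nat) (L : ngraph n) (G : groupoid (vert L)) (A : self_similar G).

Definition zs_valid (p : mor L * gel G) : Prop := src p.1 = gr p.2.
Definition zs_src (p : mor L * gel G) : vert L := gs p.2.
Definition zs_rng (p : mor L * gel G) : vert L := rng p.1.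
Definition zs_comp (p q : mor L * gel G) : mor L * gel G :=
  (cmp p.1 (act A p.2 q.1), gmul (res A p.2 q.1) q.2).

End ZS.

Definition gamma_zs (k : nat) (L : ngraph k.+1) (G : groupoid (vert L))
  (p : mor L * gel G) : Prop :=
  zs_valid p /\ deg p.1 ord_max = 0.

From mathcomp Require Import all_boot.
From Stdlib Require Import List.

Set Implicit Arguments.
Unset Strict Implicit.
Unset Printing Implicit Defensive.

(* The witness for concordance at c_i = λ_i g_i is the finite set of minimal
   common extensions μ of λ_1 and λ_2 (taken with the identity of s(μ)).  Their
   degree d(λ_1) ∨ d(λ_2) has last coordinate 0, so they lie in Γ ⋈ G; two of
   them of equal degree can only extend one another trivially, so they are
   independent; and by unique factorisation every common extension of λ_1 and
   λ_2 factors through one of them.  The groupoid parts are removed by pulling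
   back along g^-1: if μ = λβ then (λ, g)(g^-1 ▷ β, g^-1 ◁ β) = (μ, id). *)

Lemma degaddI n (a b c : {ffun 'I_n -> nat}) : degadd a b = degadd a c -> b = c.
Proof.
move/ffunP=> E; apply/ffunP=> i.
by move: (E i); rewrite !ffunE => /addnI.
Qed.

Definition degmax n (a b : {ffun 'I_n -> nat}) : {ffun 'I_n -> nat} :=
  [ffun i => maxn (a i) (b i)].

Section KGraph.
Variables (n : nat) (L : ngraph n).
Implicit Types l m mu nu : mor L.

Lemma deg_cmpE l m i : src l = rng m -> deg (cmp l m) i = deg l i + deg m i.
Proof. by move=> s; rewrite deg_cmp // ffunE. Qed.

Lemma factorisation_unique mu nu mu' nu' :
  src mu = rng nu -> src mu' = rng nu' -> cmp mu nu = cmp mu' nu' ->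
  deg mu = deg mu' -> mu = mu' /\ nu = nu'.
Proof.
move=> s s' E dmu.
have dnu : deg nu = deg nu'.
  by apply: (@degaddI _ (deg mu)); rewrite -deg_cmp // E dmu deg_cmp.
have [m0 [n0 [_ [_ [_ [_ U]]]]]] := factorisation (deg_cmp s).
have [-> ->] := U _ _ s erefl erefl erefl.
by have [-> ->] := U _ _ s' E (esym dmu) (esym dnu).
Qed.

Lemma cmpI l m m' :
  src l = rng m -> src l = rng m' -> cmp l m = cmp l m' -> m = m'.
Proof. by move=> s s' E; case: (factorisation_unique s s' E erefl). Qed.

Lemma cmp_deg_id l m : src l = rng m -> deg (cmp l m) = deg l -> cmp l m = l.
Proof.
move=> s d.
have s' : src (cmp l m) = rng (idm (src (cmp l m))) by rewrite rng_idm.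
have E : cmp l m = cmp (cmp l m) (idm (src (cmp l m))) by rewrite idm_cmpr.
by case: (factorisation_unique s s' E (esym d)) => <-.
Qed.

Lemma factor_le l (m : {ffun 'I_n -> nat}) : (forall i, m i <= deg l i) ->
  exists mu nu, [/\ src mu = rng nu, l = cmp mu nu & deg mu = m].
Proof.
move=> le; have dl : deg l = degadd m [ffun i => deg l i - m i].
  by apply/ffunP=> i; rewrite !ffunE subnKC.
by have [mu [nu [? [? [? _]]]]] := factorisation dl; exists mu, nu.
Qed.

Definition left_factor l m := exists b, src l = rng b /\ m = cmp l b.

Local Notation rmult :=
  (right_mult (fun _ => True) (@src n L) (@rng n L) (@cmp n L)).

Lemma left_factorP l m : rmult l m <-> left_factor l m.
Proof. by split=> [[b [_ bP]] | [b bP]]; exists b. Qed.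

Lemma left_factor_refl l : left_factor l l.
Proof. by exists (idm (src l)); rewrite rng_idm idm_cmpr. Qed.

Lemma left_factor_deg l m x y : src l = rng x -> src m = rng y ->
  cmp l x = cmp m y -> (forall i, deg l i <= deg m i) -> left_factor l m.
Proof.
move=> sx sy E le.
have [al [be [sab Em dal]]] := factor_le le.
rewrite {}Em in sy E *.
have sbe : src be = rng y by rewrite -sy src_cmp.
have E' : cmp al (cmp be y) = cmp l x by rewrite cmpA.
have sal : src al = rng (cmp be y) by rewrite rng_cmp.
have [eal _] := factorisation_unique sal sx E' dal.
by exists be; rewrite -eal.
Qed.

Definition mce l1 l2 mu :=
  [/\ left_factor l1 mu, left_factor l2 mu & deg mu = degmax (deg l1) (deg l2)].

Lemma mce_factor l1 l2 l : left_factor l1 l -> left_factor l2 l ->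
  exists mu nu, [/\ mce l1 l2 mu, src mu = rng nu & l = cmp mu nu].
Proof.
move=> [x1 [s1 E1]] [x2 [s2 E2]].
have le i : degmax (deg l1) (deg l2) i <= deg l i.
  by rewrite ffunE geq_max {1}E1 E2 !deg_cmpE // !leq_addr.
have [mu [nu [smn El dmu]]] := factor_le le.
have E1' : cmp l1 x1 = cmp mu nu by rewrite -E1 -El.
have E2' : cmp l2 x2 = cmp mu nu by rewrite -E2 -El.
exists mu, nu; split=> //; split=> //.
- by apply: (left_factor_deg s1 smn E1') => i; rewrite dmu ffunE leq_maxl.
- by apply: (left_factor_deg s2 smn E2') => i; rewrite dmu ffunE leq_maxr.
Qed.

Lemma mce_left_factor_eq l1 l2 mu mu' :
  mce l1 l2 mu -> mce l1 l2 mu' -> left_factor mu' mu -> mu = mu'.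
Proof.
move=> [_ _ d] [_ _ d'] [b [s E]]; rewrite E in d *.
by apply: cmp_deg_id => //; rewrite d d'.
Qed.

(* Finite alignment lists generators of l1 Λ ∩ l2 Λ; those of degree
   d(l1) ∨ d(l2) are exactly the minimal common extensions. *)
Lemma mce_list l1 l2 : finitely_aligned L ->
  exists F, forall mu, In mu F <-> mce l1 l2 mu.
Proof.
move=> /(_ l1 l2) [F0 HF0].
have common c : In c F0 -> left_factor l1 c /\ left_factor l2 c.
  move=> Fc; have [/left_factorP f1 /left_factorP f2] : rmult l1 c /\ rmult l2 c.
    by apply/HF0; exists c; split; last exact/left_factorP/left_factor_refl.
  by split.
exists (List.filter (fun c => deg c == degmax (deg l1) (deg l2)) F0) => mu.
split=> [/filter_In [/common [f1 f2] /eqP d] // | [f1 f2 d]].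
have [c [Fc /left_factorP [x [sx emu]]]] : exists c, In c F0 /\ rmult c mu.
  by apply/HF0; split; apply/left_factorP.
have [[x1 [s1 e1]] [x2 [s2 e2]]] := common c Fc.
have dc : deg c = deg mu.
  apply/ffunP=> i; apply/eqP; rewrite eqn_leq.
  have -> : deg c i <= deg mu i by rewrite emu deg_cmpE // leq_addr.
  by rewrite d ffunE geq_max {1}e1 e2 !deg_cmpE // !leq_addr.
have -> : mu = c by rewrite emu; apply: cmp_deg_id; rewrite // -emu dc.
by apply/filter_In; rewrite dc d eqxx.
Qed.

End KGraph.

Lemma gmulI V (G : groupoid V) (g h h' : gel G) :
  gs g = gr h -> gs g = gr h' -> gmul g h = gmul g h' -> h = h'.
Proof.
move=> s s' E.
have K x : gs g = gr x -> gmul (ginv g) (gmul g x) = x.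
  by move=> sx; rewrite gmulA ?gs_ginv ?gr_ginv // ginv_mull sx gid_mull.
by rewrite -(K h s) -(K h' s') E.
Qed.

Section ZappaSzep.
Variables (n : nat) (L : ngraph n) (G : groupoid (vert L)) (A : self_similar G).
Implicit Types (p q r c x : mor L * gel G) (mu : mor L).

Lemma actI g (l m : mor L) :
  gs g = rng l -> gs g = rng m -> act A g l = act A g m -> l = m.
Proof.
move=> s s' E.
have K b : gs g = rng b -> act A (ginv g) (act A g b) = b.
  by move=> sb; rewrite -act_gmul ?gs_ginv ?gr_ginv // ginv_mull sb act_gid.
by rewrite -(K l s) -(K m s') E.
Qed.

Lemma zs_valid_comp p q : zs_valid p -> zs_valid q -> zs_src p = zs_rng q ->
  zs_valid (zs_comp A p q).
Proof.
case: p q => [p1 p2] [q1 q2]; rewrite /zs_valid /zs_src /zs_rng /zs_comp /=.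
move=> vp vq s.
have sa : src p1 = rng (act A p2 q1) by rewrite rng_act.
by rewrite src_cmp // src_act // gr_gmul // gs_res.
Qed.

Lemma zs_rng_comp p q : zs_valid p -> zs_src p = zs_rng q ->
  zs_rng (zs_comp A p q) = zs_rng p.
Proof. by move=> vp s; rewrite /zs_rng rng_cmp // rng_act. Qed.

Lemma zs_src_comp p q : zs_valid q -> zs_src p = zs_rng q ->
  zs_src (zs_comp A p q) = zs_src q.
Proof. by move=> vq s; rewrite /zs_src gs_gmul // gs_res. Qed.

Lemma zs_deg_comp p q : zs_valid p -> zs_src p = zs_rng q ->
  deg (zs_comp A p q).1 = degadd (deg p.1) (deg q.1).
Proof. by move=> vp s; rewrite deg_cmp ?deg_act // rng_act. Qed.

Lemma zs_compA p q r : zs_valid p -> zs_valid q -> zs_valid r ->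
  zs_src p = zs_rng q -> zs_src q = zs_rng r ->
  zs_comp A (zs_comp A p q) r = zs_comp A p (zs_comp A q r).
Proof.
case: p q r => [p1 p2] [q1 q2] [r1 r2].
rewrite /zs_valid /zs_src /zs_rng /zs_comp /= => vp vq vr spq sqr.
have gq : gs (res A p2 q1) = gr q2 by rewrite gs_res.
have ? : src q1 = rng (act A q2 r1) by rewrite rng_act.
have ? : src p1 = rng (act A p2 q1) by rewrite rng_act.
have ? : src (act A p2 q1) = rng (act A (gmul (res A p2 q1) q2) r1).
  by rewrite rng_act ?gs_gmul // gr_gmul // src_act.
have ? : gs (res A (res A p2 q1) (act A q2 r1)) = gr (res A q2 r1).
  by rewrite gs_res ?src_act // rng_act // -gq.
have ? : gs (res A q2 r1) = gr r2 by rewrite gs_res.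
by rewrite act_cmp // -act_gmul // cmpA // res_cmp // res_gmul // gmulA.
Qed.

Lemma zs_compI c x x' : zs_valid c -> zs_valid x -> zs_valid x' ->
  zs_src c = zs_rng x -> zs_src c = zs_rng x' ->
  zs_comp A c x = zs_comp A c x' -> x = x'.
Proof.
case: c x x' => [c1 c2] [a h] [b h'].
rewrite /zs_valid /zs_src /zs_rng /zs_comp /= => vc va vb sa sb [E1 E2].
have eab : a = b by apply: (actI sa sb); apply: cmpI E1; rewrite rng_act.
by subst b; congr pair; apply: gmulI E2; rewrite gs_res.
Qed.

Lemma zs_cancel_comp c x a z : zs_valid c -> zs_valid x -> zs_valid a ->
  zs_valid z -> zs_src c = zs_rng x -> zs_src c = zs_rng a ->
  zs_src a = zs_rng z ->
  zs_comp A c x = zs_comp A (zs_comp A c a) z -> x = zs_comp A a z.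
Proof.
move=> vc vx va vz sx sa sz E.
apply: (zs_compI vc vx (zs_valid_comp va vz sz) sx) => //.
  by rewrite zs_rng_comp.
by rewrite -zs_compA.
Qed.

Definition zs_mor mu : mor L * gel G := (mu, gid G (src mu)).

Lemma zs_valid_mor mu : zs_valid (zs_mor mu).
Proof. by rewrite /zs_valid gr_gid. Qed.

Lemma zs_src_mor mu : zs_src (zs_mor mu) = src mu.
Proof. exact: gs_gid. Qed.

Lemma zs_mor_comp mu x : zs_valid x -> src mu = zs_rng x ->
  zs_comp A (zs_mor mu) x = (cmp mu x.1, x.2).
Proof.
case: x => x h; rewrite /zs_valid /zs_rng /zs_comp /zs_mor /= => vx s.
by rewrite s act_gid res_gid vx gid_mull.
Qed.

Lemma zs_reach (l mu : mor L) (g : gel G) : src l = gr g -> left_factor l mu ->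
  exists a, [/\ zs_valid a, zs_rng a = gs g, zs_src a = src mu
              & zs_comp A (l, g) a = zs_mor mu].
Proof.
move=> v [b [s ->]]; exists (act A (ginv g) b, res A (ginv g) b).
have ? : gs (ginv g) = rng b by rewrite gs_ginv -v.
have ? : gs g = gr (ginv g) by rewrite gr_ginv.
rewrite /zs_valid /zs_rng /zs_src /zs_comp /zs_mor /=; split.
- by rewrite src_act.
- by rewrite rng_act // gr_ginv.
- by rewrite gs_res // src_cmp.
- by rewrite -act_gmul // -res_gmul // ginv_mulr -v s act_gid res_gid src_cmp.
Qed.

End ZappaSzep.

Section Gamma.
Variables (k : nat) (L : ngraph k.+1) (G : groupoid (vert L)).
Variable A : self_similar G.
Implicit Types (p q c a x y : mor L * gel G) (mu : mor L).

Local Notation gamma := (@gamma_zs k L G).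
Local Notation gmult :=
  (right_mult (@gamma_zs k L G) (@zs_src _ L G) (@zs_rng _ L G) (zs_comp A)).

Lemma gamma_zs_comp p q : zs_valid p -> zs_valid q -> zs_src p = zs_rng q ->
  gamma (zs_comp A p q) <-> gamma p /\ gamma q.
Proof.
move=> vp vq s; rewrite /gamma_zs zs_deg_comp // ffunE.
split=> [[_ /eqP] | [[_ d1] [_ d2]]].
- by rewrite addn_eq0 => /andP [/eqP d1 /eqP d2].
- by split; [exact: zs_valid_comp | rewrite d1 d2].
Qed.

Lemma mce_gamma l1 l2 mu : deg l1 ord_max = 0 -> deg l2 ord_max = 0 ->
  mce l1 l2 mu -> gamma (zs_mor G mu).
Proof.
move=> d1 d2 [_ _ d]; split; first exact: zs_valid_mor.
by rewrite /= d ffunE d1 d2.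
Qed.

Lemma gamma_mult_trans c a y : zs_valid c -> gmult c a -> gmult a y -> gmult c y.
Proof.
move=> vc [x [[vx Cx] [sx ->]]] [z [Cz [sz ->]]].
rewrite zs_src_comp // in sz.
exists (zs_comp A x z); split; last split.
- by apply/gamma_zs_comp => //; case: Cz.
- by rewrite zs_rng_comp.
- by rewrite zs_compA //; case: Cz.
Qed.

Lemma gamma_mult_left_factor l g mu : src l = gr g -> left_factor l mu ->
  gamma (zs_mor G mu) -> gmult (l, g) (zs_mor G mu).
Proof.
move=> v f Cmu; have [a [va ra sa Ea]] := zs_reach A v f.
exists a; split; last by split; [rewrite ra | rewrite Ea].
by move: Cmu; rewrite -Ea => /(@gamma_zs_comp (l, g) a v va (esym ra)) [].
Qed.

Section Concordance.
Variables (l1 l2 : mor L) (g1 g2 : gel G).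
Hypotheses (v1 : src l1 = gr g1) (v2 : src l2 = gr g2).
Hypotheses (d1 : deg l1 ord_max = 0) (d2 : deg l2 ord_max = 0).
Variable Ms : list (mor L).
Hypothesis Ms_mce : forall mu, In mu Ms <-> mce l1 l2 mu.

Local Notation mce_mors := (List.map (zs_mor G) Ms).

Lemma in_mce_mors a :
  In a mce_mors <-> exists mu, a = zs_mor G mu /\ mce l1 l2 mu.
Proof.
split=> [/in_map_iff [mu [<- /Ms_mce M]] | [mu [-> /Ms_mce M]]].
- by exists mu.
- exact: in_map.
Qed.

Lemma common_mce y x1 x2 : zs_valid x1 -> zs_valid x2 ->
  gs g1 = rng x1.1 -> gs g2 = rng x2.1 ->
  y = zs_comp A (l1, g1) x1 -> y = zs_comp A (l2, g2) x2 ->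
  exists mu nu, [/\ mce l1 l2 mu, zs_valid (nu, y.2), src mu = rng nu
                  & y = zs_comp A (zs_mor G mu) (nu, y.2)].
Proof.
move=> vx1 vx2 s1 s2 E1 E2.
have vy : src y.1 = gr y.2.
  by rewrite E1; exact: (zs_valid_comp A (p := (l1, g1)) v1).
have f1 : left_factor l1 y.1 by exists (act A g1 x1.1); rewrite E1 rng_act.
have f2 : left_factor l2 y.1 by exists (act A g2 x2.1); rewrite E2 rng_act.
have [mu [nu [M smn ey]]] := mce_factor f1 f2.
have vnu : zs_valid (nu, y.2) by rewrite /zs_valid /= -vy ey src_cmp.
exists mu, nu; split=> //.
by rewrite zs_mor_comp // -ey; case: (y).
Qed.

Lemma mce_mult mu : mce l1 l2 mu ->
  gmult (l1, g1) (zs_mor G mu) /\ gmult (l2, g2) (zs_mor G mu).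
Proof.
move=> M; have Cmu := mce_gamma d1 d2 M; case: M => f1 f2 _.
by split; apply: gamma_mult_left_factor.
Qed.

Lemma mce_mors_gamma : forall a, In a mce_mors -> gamma a.
Proof. by move=> a /in_mce_mors [mu [-> M]]; exact: mce_gamma M. Qed.

Lemma mce_mors_independent :
  forall a a', In a mce_mors -> In a' mce_mors -> a <> a' ->
  ~ right_mult (@zs_valid _ L G) (@zs_src _ L G) (@zs_rng _ L G) (zs_comp A) a' a.
Proof.
move=> a a' /in_mce_mors [mu [-> M]] /in_mce_mors [mu' [-> M']] ne.
move=> [x [vx [sx E]]].
rewrite zs_src_mor in sx; rewrite zs_mor_comp // in E.
apply: ne; congr (zs_mor G); apply: mce_left_factor_eq M M' _.
by exists x.1; split=> //; rewrite -[LHS]/((zs_mor G mu).1) E.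
Qed.

Lemma gamma_mult_common y :
  (gmult (l1, g1) y /\ gmult (l2, g2) y) <-> exists a, In a mce_mors /\ gmult a y.
Proof.
split=> [[[x1 [[vx1 dx1] [s1 E1]]] [x2 [[vx2 _] [s2 E2]]]] | ].
- have [mu [nu [M vnu smn Ey]]] := common_mce vx1 vx2 s1 s2 E1 E2.
  have snu : zs_src (zs_mor G mu) = zs_rng (nu, y.2) by rewrite zs_src_mor.
  have Cy : gamma y.
    by rewrite E1; apply/(gamma_zs_comp (p := (l1, g1)) v1 vx1 s1).
  have [_ Cnu] : gamma (zs_mor G mu) /\ gamma (nu, y.2).
    by apply/(gamma_zs_comp (zs_valid_mor G mu) vnu snu); rewrite -Ey.
  exists (zs_mor G mu); split; first by apply/in_mce_mors; exists mu.
  by exists (nu, y.2).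
- case=> a [/in_mce_mors [mu [-> M]] mult]; have [m1 m2] := mce_mult M.
  by split; [apply: (gamma_mult_trans (c := (l1, g1))) m1 mult
          | apply: (gamma_mult_trans (c := (l2, g2))) m2 mult].
Qed.

Lemma common_factor_mce_mors : forall x1 x2, zs_valid x1 -> zs_valid x2 ->
  zs_src (l1, g1) = zs_rng x1 -> zs_src (l2, g2) = zs_rng x2 ->
  zs_comp A (l1, g1) x1 = zs_comp A (l2, g2) x2 ->
  exists a1 a2 y, zs_valid a1 /\ zs_valid a2 /\ zs_valid y /\
    zs_src (l1, g1) = zs_rng a1 /\ zs_src (l2, g2) = zs_rng a2 /\
    zs_comp A (l1, g1) a1 = zs_comp A (l2, g2) a2 /\
    In (zs_comp A (l1, g1) a1) mce_mors /\
    zs_src a1 = zs_rng y /\ zs_src a2 = zs_rng y /\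
    x1 = zs_comp A a1 y /\ x2 = zs_comp A a2 y.
Proof.
move=> x1 x2 vx1 vx2 s1 s2 E.
have [mu [nu [M vnu smn Ey]]] := common_mce vx1 vx2 s1 s2 erefl E.
set y := zs_comp A (l1, g1) x1 in E Ey.
have [f1 f2 _] := M.
have [a1 [va1 ra1 sa1 Ea1]] := zs_reach A v1 f1.
have [a2 [va2 ra2 sa2 Ea2]] := zs_reach A v2 f2.
have sa1y : zs_src a1 = zs_rng (nu, y.2) by rewrite sa1.
have sa2y : zs_src a2 = zs_rng (nu, y.2) by rewrite sa2.
have ex1 : x1 = zs_comp A a1 (nu, y.2).
  apply: (zs_cancel_comp (c := (l1, g1)) v1 vx1 va1 vnu s1 (esym ra1) sa1y).
  by rewrite Ea1 -Ey.
have ex2 : x2 = zs_comp A a2 (nu, y.2).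
  apply: (zs_cancel_comp (c := (l2, g2)) v2 vx2 va2 vnu s2 (esym ra2) sa2y).
  by rewrite Ea2 -Ey E.
have mu_in : In (zs_mor G mu) mce_mors by apply/in_mce_mors; exists mu.
exists a1, a2, (nu, y.2); rewrite Ea1 Ea2.
by repeat split; rewrite ?ra1 ?ra2.
Qed.

End Concordance.
End Gamma.

Theorem lemma3p16 (k : nat) (L : ngraph k.+1) (G : groupoid (vert L))
  (A : self_similar G) :
  finitely_aligned L ->
  concordant (@zs_valid _ L G) (@zs_src _ L G) (@zs_rng _ L G) (zs_comp A)
    (@gamma_zs k L G).
Proof.
move=> FA [l1 g1] [l2 g2] [v1 d1] [v2 d2] _.
rewrite /zs_valid /= in v1 v2; rewrite /= in d1 d2.
have [Ms Ms_mce] := mce_list l1 l2 FA.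
exists (List.map (zs_mor G) Ms); split; [|split; [|split]].
- exact (mce_mors_gamma (G := G) d1 d2 Ms_mce).
- exact (mce_mors_independent (A := A) Ms_mce).
- exact (gamma_mult_common A v1 v2 d1 d2 Ms_mce).
- exact (common_factor_mce_mors (A := A) v1 v2 Ms_mce).
Qed.
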